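(* Let $n\ge2$ and $\rho\in\mathbb{C}\setminus\{-1,0,1\}$. If $z_k$ is a zero of $p_{2n}(\rho,z)$, then $z_k\neq0$, $z_k^{-1}$ is also a zero of $p_{2n}(\rho,z)$, $z_k\notin\{\rho,1/\rho\}$, and $$\lambda_k=\frac{z_k(1-\rho^2)}{(z_k-\rho)(1-\rho z_k)}=\frac{z_k^{-1}(1-\rho^2)}{(z_k^{-1}-\rho)(1-\rho z_k^{-1})}$$ is an eigenvalue of $K_n(\rho)$. Conversely, if $\lambda_k$ is an eigenvalue of $K_n(\rho)$, then $\lambda_k\neq0$ and the two numbers $$z_k=\tau_k+(\tau_k^2-1)^{1/2},\qquad z_k^{-1}=\tau_k-(\tau_k^2-1)^{1/2}$$ are zeros of $p_{2n}(\rho,z)$, where $\tau_k=\frac{\rho^2(\lambda_k+1)+\lambda_k-1}{2\lambda_k\rho}$.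
   Context: $K_n(\rho)=\left[\rho^{|j-k|}\right]_{j,k=1}^n$ ($n\times n$, $\rho\in\mathbb{C}$). $p_{2n}(\rho,z)=z^{2n}+(1+\rho^2)\sum_{k=1}^{n-1}z^{2k}-2\rho\sum_{k=0}^{n-1}z^{2k+1}+1$, a monic polynomial of degree $2n$ in $z$, equal to $\frac{z^{2n}(z-\rho)^2-(\rho z-1)^2}{z^2-1}$ for $z\ne\pm1$. *)

From mathcomp Require Import all_boot all_order all_algebra.
Set Implicit Arguments. Unset Strict Implicit. Unset Printing Implicit Defensive.
Import Order.TTheory GRing.Theory Num.Theory.
Local Open Scope ring_scope.

(* K_n(rho) = [rho^|j-k|]_{j,k}, indices 0..n-1 (shift-invariant) *)
Definition Kmat (C : numClosedFieldType) (n : nat) (rho : C) : 'M[C]_n :=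
  \matrix_(j < n, k < n) rho ^+ (maxn j k - minn j k)%N.

Definition p2n (C : numClosedFieldType) (n : nat) (rho : C) : {poly C} :=
  'X^(2 * n) + (1 + rho ^+ 2) *: (\sum_(1 <= k < n) 'X^(2 * k))
  - (2 * rho) *: (\sum_(0 <= k < n) 'X^(2 * k + 1)) + 1.

Definition lam_of (C : numClosedFieldType) (rho z : C) : C :=
  z * (1 - rho ^+ 2) / ((z - rho) * (1 - rho * z)).

Definition tau_of (C : numClosedFieldType) (rho lam : C) : C :=
  (rho ^+ 2 * (lam + 1) + lam - 1) / (2 * lam * rho).

From mathcomp Require Import all_boot all_order all_algebra.
From mathcomp Require Import ring zify.
Set Implicit Arguments. Unset Strict Implicit. Unset Printing Implicit Defensive.
Import Order.TTheory GRing.Theory Num.Theory.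
Local Open Scope ring_scope.

(* Let T be the tridiagonal matrix with diagonal (1, 1 + rho^2, ..., 1 + rho^2, 1)
   and off-diagonal entries -rho.  Then K_n(rho) T = (1 - rho^2) I, so lam is an
   eigenvalue of K_n(rho) iff lam != 0 and (1 - rho^2) / lam is an eigenvalue of T.
   Write the latter as 1 + rho^2 - rho t.  Since rho != 0, the first n - 1 eigen-
   equations of T force a left eigenvector to be proportional to (w_1, ..., w_n),
   where w_0 = rho, w_1 = 1 and w_(k+2) = t w_(k+1) - w_k; the last one is the end
   condition w_(n+1) = rho w_n.  For t = z + 1/z one checks
   z^n (w_(n+1) - rho w_n) = p_2n(rho, z), so the end condition says that z, and
   equally 1/z, is a zero of p_2n.  Solving 1 + rho^2 - rho (z + 1/z) = (1 - rho^2) / lam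
   for lam gives lam_k, and for z gives the roots of z^2 - 2 tau_k z + 1. *)

Section ChebSeq.
Variables (R : comPzRingType) (rho : R).

Fixpoint cheb_seq (t : R) (k : nat) : R :=
  match k with
  | 0 => rho
  | 1 => 1
  | (k'.+1 as k1).+1 => t * cheb_seq t k1 - cheb_seq t k'
  end.

Lemma cheb_seqSS t k : cheb_seq t k.+2 = t * cheb_seq t k.+1 - cheb_seq t k.
Proof. by []. Qed.

End ChebSeq.

Section ChebSeqClosedForm.
Variables (F : fieldType) (rho z : F).
Hypothesis z_neq0 : z != 0.
Local Notation w := (cheb_seq rho (z + z^-1)).

Lemma cheb_seq_diff k : z ^+ k * (w k.+1 - z * w k) = 1 - rho * z.
Proof.
elim: k => [|k IHk]; first by rewrite mul1r mulrC.
rewrite -IHk cheb_seqSS exprSr -mulrA; congr (_ * _).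
by field.
Qed.

Lemma cheb_seq_geom k : z ^+ k * w k = rho + (z - rho) * \sum_(i < k) (z ^+ 2) ^+ i.
Proof.
elim: k => [|k IHk]; first by rewrite big_ord0 mul1r mulr0 addr0.
have wS : z ^+ k.+1 * w k.+1 = z ^+ 2 * (z ^+ k * w k) + z * (1 - rho * z).
  by rewrite -(cheb_seq_diff k) exprS; ring.
have sumS : \sum_(i < k.+1) (z ^+ 2) ^+ i = 1 + z ^+ 2 * \sum_(i < k) (z ^+ 2) ^+ i.
  by rewrite big_ord_recl mulr_sumr; congr (_ + _); apply: eq_bigr => i _; rewrite -exprS.
by rewrite wS IHk sumS; ring.
Qed.

End ChebSeqClosedForm.

Section KMSPoly.
Variables (C : numClosedFieldType) (rho : C).

Lemma horner_p2n n z : (0 < n)%N ->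
  (p2n n rho).[z] = (z - rho) ^+ 2 * \sum_(i < n) (z ^+ 2) ^+ i + 1 - rho ^+ 2.
Proof.
move=> n_gt0; set S := \sum_(i < n) _.
have evenS : \sum_(1 <= k < n) ('X^(2 * k)).[z] = S - 1.
  rewrite /S -(big_mkord xpredT (fun i => (z ^+ 2) ^+ i)) (big_ltn n_gt0) expr0 addrC addKr.
  by apply: eq_bigr => i _; rewrite hornerXn exprM.
have oddS : \sum_(0 <= k < n) ('X^(2 * k + 1)).[z] = z * S.
  rewrite big_mkord mulr_sumr; apply: eq_bigr => i _.
  by rewrite hornerXn exprD exprM mulrC.
have topS : z ^+ (2 * n) = (z ^+ 2 - 1) * S + 1 by rewrite exprM -subrX1 subrK.
by rewrite /p2n !hornerE !horner_sum evenS oddS topS; ring.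
Qed.

Lemma horner_p2n0 n : (0 < n)%N -> (p2n n rho).[0] = 1.
Proof.
move=> n_gt0; rewrite horner_p2n //.
have := subrX1 ((0 : C) ^+ 2) n; rewrite !expr0n /= (gtn_eqF n_gt0) mulr0n !sub0r.
by rewrite mulN1r => /oppr_inj <-; ring.
Qed.

Lemma horner_p2n_cheb n z : (0 < n)%N -> z != 0 ->
  (p2n n rho).[z] =
  z ^+ n * (cheb_seq rho (z + z^-1) n.+1 - rho * cheb_seq rho (z + z^-1) n).
Proof.
move=> n_gt0 z_neq0; set w := cheb_seq rho (z + z^-1).
have -> : w n.+1 - rho * w n = (w n.+1 - z * w n) + (z - rho) * w n by ring.
rewrite mulrDr cheb_seq_diff // mulrCA cheb_seq_geom // horner_p2n //; ring.
Qed.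

Lemma root_p2n_cheb n z : (0 < n)%N -> z != 0 ->
  root (p2n n rho) z =
  (cheb_seq rho (z + z^-1) n.+1 == rho * cheb_seq rho (z + z^-1) n).
Proof.
move=> n_gt0 z_neq0.
by rewrite /root horner_p2n_cheb // mulf_eq0 expf_eq0 (negbTE z_neq0) andbF subr_eq0.
Qed.

Lemma root_p2n_neq0 n z : (0 < n)%N -> root (p2n n rho) z -> z != 0.
Proof. by move=> n_gt0; apply: contraTneq => ->; rewrite /root horner_p2n0 ?oner_eq0. Qed.

Lemma root_p2nV n z : (0 < n)%N -> root (p2n n rho) z -> root (p2n n rho) z^-1.
Proof.
move=> n_gt0 root_z; have z_neq0 := root_p2n_neq0 n_gt0 root_z.
by rewrite root_p2n_cheb ?invr_eq0 // invrK [z^-1 + _]addrC -root_p2n_cheb.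
Qed.

Lemma root_p2n_rho n : (0 < n)%N -> rho ^+ 2 != 1 -> ~~ root (p2n n rho) rho.
Proof.
by move=> n_gt0 rho2_neq1; rewrite /root horner_p2n // subrr expr0n mul0r add0r subr_eq0 eq_sym.
Qed.

Lemma lam_ofE z : z != 0 ->
  lam_of rho z = (1 - rho ^+ 2) / (1 + rho ^+ 2 - rho * (z + z^-1)).
Proof.
move=> z_neq0.
have -> : 1 + rho ^+ 2 - rho * (z + z^-1) = (z - rho) * (1 - rho * z) / z by field.
by rewrite invf_div /lam_of mulrCA mulrA.
Qed.

Lemma lam_ofV z : z != 0 -> lam_of rho z^-1 = lam_of rho z.
Proof. by move=> z_neq0; rewrite !lam_ofE ?invr_eq0 // invrK [z^-1 + _]addrC. Qed.

End KMSPoly.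

Section Tridiagonal.
Variables (F : fieldType) (rho : F) (n : nat).

Definition Ktri_diag (k : nat) : F :=
  if (0 < k)%N && (k.+1 < n)%N then 1 + rho ^+ 2 else 1.

Definition Ktri : 'M[F]_n := \matrix_(j, k)
  ((if j == k :> nat then Ktri_diag k else 0)
   - (if (0 < k)%N && (j == k.-1 :> nat) then rho else 0)
   - (if j == k.+1 :> nat then rho else 0)).

Definition rowseq (G : nat -> F) : 'rV[F]_n := \row_(j < n) G j.

Lemma rowseq_mul_Ktri G (k : 'I_n) :
  (rowseq G *m Ktri) 0 k =
  G k * Ktri_diag k - (if (0 < k)%N then rho * G k.-1 else 0)
  - (if (k.+1 < n)%N then rho * G k.+1 else 0).
Proof.
have mul_if (b : bool) x y : x * (if b then y else 0) = if b then x * y else 0.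
  by case: b; rewrite ?mulr0.
rewrite !mxE; under eq_bigr do rewrite !mxE !mulrBr !mul_if.
rewrite !sumrB -!big_mkcond /= (big_ord1_eq _ (fun j => G j * Ktri_diag k)).
rewrite (big_ord1_eq _ (fun j => G j * rho) k.+1) ltn_ord.
case: (posnP k) => [-> | k_gt0] /=; first by rewrite big_pred0 // mulrC [G 1%N * _]mulrC.
rewrite (big_ord1_eq _ (fun j => G j * rho)) (leq_ltn_trans (leq_pred k) (ltn_ord k)).
by rewrite mulrC [G k.-1 * _]mulrC [G k.+1 * _]mulrC.
Qed.

Lemma cheb_row_mul_Ktri t (k : 'I_n) : (1 < n)%N ->
  (rowseq (fun j => cheb_seq rho t j.+1) *m Ktri) 0 k =
  (1 + rho ^+ 2 - rho * t) * cheb_seq rho t k.+1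
  + (if k.+1 == n then rho * (cheb_seq rho t n.+1 - rho * cheb_seq rho t n) else 0).
Proof.
move=> n_gt1; rewrite rowseq_mul_Ktri /Ktri_diag.
case: (posnP k) => [k0 | k_gt0].
  by rewrite k0 n_gt1 (ltn_eqF n_gt1) /=; ring.
rewrite (prednK k_gt0) andTb.
have [lt_k1n | ge_k1n] := ltnP k.+1 n.
  by rewrite ltn_eqF // cheb_seqSS; ring.
have k1n : k.+1 = n by apply/anti_leq; rewrite ge_k1n ltn_ord.
have -> : cheb_seq rho t n.+1 = cheb_seq rho t k.+2 by rewrite k1n.
have -> : cheb_seq rho t n = cheb_seq rho t k.+1 by rewrite k1n.
by rewrite cheb_seqSS k1n eqxx; ring.
Qed.

Lemma Ktri_eigen_eq0 mu G : rho != 0 -> G 0%N = 0 ->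
  (forall k : 'I_n, (k.+1 < n)%N -> (rowseq G *m Ktri) 0 k = mu * G k) ->
  forall j, (j < n)%N -> G j = 0.
Proof.
move=> rho_neq0 G0 eigG.
suff G_eq0 j : (j < n)%N -> forall i, (i <= j)%N -> G i = 0.
  by move=> j lt_jn; apply: G_eq0 lt_jn j (leqnn j).
elim: j => [_ i | j IHj lt_j1n i]; first by rewrite leqn0 => /eqP ->.
have lt_jn := ltnW lt_j1n.
rewrite leq_eqVlt ltnS => /orP [/eqP -> | /(IHj lt_jn) //].
have := eigG (Ordinal lt_jn) lt_j1n; rewrite rowseq_mul_Ktri /= lt_j1n.
rewrite (IHj lt_jn j) // (IHj lt_jn j.-1) ?leq_pred // mulr0 mul0r if_same subrr sub0r mulr0.
by move/eqP; rewrite oppr_eq0 mulf_eq0 (negbTE rho_neq0) => /eqP.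
Qed.

Lemma eigenvalue_Ktri t : (1 < n)%N -> rho != 0 ->
  eigenvalue Ktri (1 + rho ^+ 2 - rho * t) =
  (cheb_seq rho t n.+1 == rho * cheb_seq rho t n).
Proof.
move=> n_gt1 rho_neq0; set mu := 1 + _ - _; set w := cheb_seq rho t.
have n_gt0 : (0 < n)%N := ltnW n_gt1.
have lt_n1n : (n.-1 < n)%N by rewrite ltn_predL.
pose lst : 'I_n := Ordinal lt_n1n.
set W := rowseq (fun j => w j.+1).
have lstE (k : 'I_n) : (k == lst) = (k.+1 == n) by rewrite -val_eqE /= -eqSS prednK.
have WK : W *m Ktri = mu *: W + (rho * (w n.+1 - rho * w n)) *: delta_mx 0 lst.
  apply/rowP => k; rewrite cheb_row_mul_Ktri // !mxE eqxx lstE /=.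
  by case: eqP; rewrite ?mulr1 ?mulr0.
apply/eigenvalueP/eqP => [[v vK v_neq0] | w_end].
  pose G j := v 0 (insubd (Ordinal n_gt0) j).
  have vG : v = rowseq G by apply/rowP => j; rewrite mxE /G valKd.
  have G_cheb j : (j < n)%N -> G j = G 0%N * w j.+1.
    move=> lt_jn; apply/eqP; rewrite -subr_eq0; apply/eqP; move: j lt_jn.
    apply: (@Ktri_eigen_eq0 mu _ rho_neq0) => [|k lt_k1n]; first by rewrite /= mulr1 subrr.
    have -> : rowseq (fun j => G j - G 0%N * w j.+1) = rowseq G - G 0%N *: W.
      by apply/rowP => j; rewrite !mxE.
    rewrite mulmxBl -scalemxAl -vG vK vG WK !mxE eqxx lstE (ltn_eqF lt_k1n) /=.
    by rewrite mulr0 addr0; ring.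
  have vW : v = G 0%N *: W by apply/rowP => j; rewrite vG !mxE G_cheb.
  have G0_neq0 : G 0%N != 0 by apply: contraNneq v_neq0 => G0; rewrite vW G0 scale0r.
  move: vK; rewrite vW -scalemxAl WK scalerDr !scalerA [G 0%N * mu]mulrC.
  move/(congr1 (fun M => M - (mu * G 0%N) *: W)); rewrite addrAC subrr add0r.
  move=> /rowP /(_ lst) /eqP; rewrite !mxE !eqxx mulr1 !mulf_eq0 (negbTE G0_neq0).
  by rewrite (negbTE rho_neq0) subr_eq0 => /eqP.
exists W; first by rewrite WK w_end subrr mulr0 scale0r addr0.
by apply/eqP => /rowP /(_ (Ordinal n_gt0)); rewrite !mxE => /eqP; rewrite oner_eq0.
Qed.

End Tridiagonal.

Lemma eigenvalue_mulmx_scalar (F : fieldType) m (A B : 'M[F]_m) c a :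
  A *m B = c%:M -> c != 0 -> eigenvalue A a -> (a != 0) && eigenvalue B (c / a).
Proof.
move=> AB c_neq0 /eigenvalueP [v vA v_neq0].
have cv : c *: v = a *: (v *m B) by rewrite -mul_mx_scalar -AB mulmxA vA scalemxAl.
have a_neq0 : a != 0.
  apply: contraNneq v_neq0 => a0; move: cv; rewrite a0 scale0r => /eqP.
  by rewrite scaler_eq0 (negbTE c_neq0).
rewrite a_neq0; apply/eigenvalueP; exists v => //.
by apply: (scalerI a_neq0); rewrite -cv scalerA mulrCA mulfV // mulr1.
Qed.

Section KMSMatrix.
Variables (C : numClosedFieldType) (rho : C) (n : nat).
Hypothesis n_gt1 : (1 < n)%N.

Lemma Kmat_mul_Ktri : Kmat n rho *m Ktri rho n = (1 - rho ^+ 2)%:M.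
Proof.
apply/matrixP => i k.
pose K (j : nat) := rho ^+ (maxn i j - minn i j).
have -> : (Kmat n rho *m Ktri rho n) i k = (rowseq n K *m Ktri rho n) 0 k.
  by rewrite !mxE; apply: eq_bigr => j _; rewrite !mxE.
have Kexp j d : (maxn i j - minn i j)%N = d -> K j = rho ^+ d by move=> <-.
rewrite rowseq_mul_Ktri /Ktri_diag !mxE.
have lt_kn := ltn_ord k; have lt_in := ltn_ord i.
case: (ltngtP i k) => [lt_ik | lt_ki | eq_ik].
- rewrite -val_eqE /= (ltn_eqF lt_ik) mulr0n (Kexp k (k - i.+1)%N.+1); last by lia.
  rewrite (Kexp k.-1 (k - i.+1)%N); last by lia.
  rewrite (leq_ltn_trans (leq0n i) lt_ik) /=.
  case: ifP => _; last by rewrite exprS; ring.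
  by rewrite (Kexp k.+1 (k - i.+1)%N.+2); [rewrite !exprS; ring | lia].
- rewrite -val_eqE /= (gtn_eqF lt_ki) mulr0n (Kexp k (i - k.+1)%N.+1); last by lia.
  rewrite (Kexp k.+1 (i - k.+1)%N); last by lia.
  rewrite (leq_ltn_trans lt_ki lt_in).
  case: (posnP k) => [k0 | k_gt0] /=; first by rewrite exprS; ring.
  by rewrite (Kexp k.-1 (i - k.+1)%N.+2); [rewrite !exprS; ring | lia].
- rewrite -val_eqE /= eq_ik eqxx mulr1n (Kexp k 0%N); last by lia.
  case: (posnP k) => [k0 | k_gt0] /=.
    by rewrite k0 n_gt1 (Kexp 1%N 1%N); [ring | lia].
  rewrite (Kexp k.-1 1%N); last by lia.
  by case: ifP => _; [rewrite (Kexp k.+1 1%N); [ring | lia] | ring].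
Qed.

Hypotheses (rho_neq0 : rho != 0) (rho2_neq1 : rho ^+ 2 != 1).

Let n_gt0 : (0 < n)%N. Proof. exact: ltnW. Qed.
Let onem_rho2_neq0 : 1 - rho ^+ 2 != 0. Proof. by rewrite subr_eq0 eq_sym. Qed.

Lemma Ktri_mul_Kmat : Ktri rho n *m Kmat n rho = (1 - rho ^+ 2)%:M.
Proof.
set c := 1 - _.
have : (c^-1 *: Kmat n rho) *m Ktri rho n = 1%:M.
  by rewrite -scalemxAl Kmat_mul_Ktri scale_scalar_mx mulVf.
move/mulmx1C; rewrite -scalemxAr => /(congr1 ( *:%R c)).
by rewrite scalerA mulfV // scale1r => ->; rewrite scale_scalar_mx mulr1.
Qed.

Lemma eigenvalue_Ktri_root z : z != 0 ->
  eigenvalue (Ktri rho n) (1 + rho ^+ 2 - rho * (z + z^-1)) = root (p2n n rho) z.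
Proof. by move=> z_neq0; rewrite eigenvalue_Ktri // root_p2n_cheb. Qed.

Lemma eigenvalue_Kmat_lam_of z : root (p2n n rho) z -> eigenvalue (Kmat n rho) (lam_of rho z).
Proof.
move=> root_z; have z_neq0 := root_p2n_neq0 n_gt0 root_z.
rewrite -eigenvalue_Ktri_root // in root_z.
have /andP [_] := eigenvalue_mulmx_scalar Ktri_mul_Kmat onem_rho2_neq0 root_z.
by rewrite lam_ofE.
Qed.

Lemma eigenvalue_Kmat_neq0 lam : eigenvalue (Kmat n rho) lam -> lam != 0.
Proof.
by case/(eigenvalue_mulmx_scalar Kmat_mul_Ktri onem_rho2_neq0)/andP.
Qed.

Lemma eigenvalue_Kmat_root lam e : eigenvalue (Kmat n rho) lam ->
  e ^+ 2 = tau_of rho lam ^+ 2 - 1 -> root (p2n n rho) (tau_of rho lam + e).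
Proof.
case/(eigenvalue_mulmx_scalar Kmat_mul_Ktri onem_rho2_neq0)/andP => lam_neq0 eigT.
set tau := tau_of rho lam => e2.
have prod1 : (tau + e) * (tau - e) = 1 by rewrite -[RHS](subKr (tau ^+ 2)) -e2; ring.
have z_neq0 : tau + e != 0.
  by apply/eqP => z0; move/eqP: prod1; rewrite z0 mul0r eq_sym oner_eq0.
have zV : (tau + e)^-1 = tau - e by apply: (mulfI z_neq0); rewrite mulfV.
rewrite -eigenvalue_Ktri_root // zV (_ : tau + e + (tau - e) = 2 * tau); last by ring.
rewrite (_ : 1 + _ - _ = (1 - rho ^+ 2) / lam) // /tau /tau_of; field.
by rewrite lam_neq0 rho_neq0.
Qed.

End KMSMatrix.

Theorem theorem3p3 (C : numClosedFieldType) (n : nat) (rho : C) :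
  (2 <= n)%N -> rho != 0 -> rho != 1 -> rho != -1 ->
  (forall z : C, root (p2n n rho) z ->
     [/\ z != 0, root (p2n n rho) z^-1, z != rho & z != rho^-1] /\
     lam_of rho z = lam_of rho z^-1 /\
     eigenvalue (Kmat n rho) (lam_of rho z)) /\
  (forall lam : C, eigenvalue (Kmat n rho) lam ->
     [/\ lam != 0,
         root (p2n n rho) (tau_of rho lam + sqrtC (tau_of rho lam ^+ 2 - 1)) &
         root (p2n n rho) (tau_of rho lam - sqrtC (tau_of rho lam ^+ 2 - 1))]).
Proof.
move=> n_gt1 rho_neq0 rho_neq1 rho_neqN1; have n_gt0 := ltnW n_gt1.
have rho2_neq1 : rho ^+ 2 != 1 by rewrite sqrf_eq1 negb_or rho_neq1.
have rho_not_root := root_p2n_rho n_gt0 rho2_neq1.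
split=> [z root_z | lam eig_lam].
  have z_neq0 := root_p2n_neq0 n_gt0 root_z; have root_zV := root_p2nV n_gt0 root_z.
  split; first split=> //.
  - by apply: contraTneq root_z => ->.
  - by apply: contraTneq root_zV => ->; rewrite invrK.
  rewrite lam_ofV //; split=> //.
  exact: (eigenvalue_Kmat_lam_of n_gt1 rho_neq0 rho2_neq1 root_z).
have root_tau := eigenvalue_Kmat_root n_gt1 rho_neq0 rho2_neq1 eig_lam.
split; first exact: (eigenvalue_Kmat_neq0 n_gt1 rho2_neq1 eig_lam).
  by apply: root_tau; rewrite sqrtCK.
by apply: root_tau; rewrite sqrrN sqrtCK.
Qed.
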